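(* Let $X$ be a strongly $QI_2$-continuous $T_0$ space. Then $GSI_2$-convergence in $X$ is topological.
   Context: For a $T_0$ space $X$, the specialization order is $x\le y$ iff $x\in \mathrm{cl}\{y\}$; $\uparrow A=\{x: a\le x\text{ for some } a\in A\}$, $\uparrow x=\uparrow\{x\}$; $A^\uparrow$, $A^\downarrow$ are the sets of upper and lower bounds of $A$, and $A^\delta=(A^\uparrow)^\downarrow$. A nonempty subset $A$ of a space is irreducible if whenever $A\subseteq F_1\cup F_2$ with $F_1,F_2$ closed, $A\subseteq F_1$ or $A\subseteq F_2$. $X^{(<\omega)}$ is the set of nonempty finite subsets of $X$. $P_S(X)$ is the set of nonempty compact saturated (upper) subsets of $X$ with the upper Vietoris topology, basis $\{\square U: U\text{ open}\}$, $\square U=\{Q: Q\subseteq U\}$. A net is eventually in $U$ if from some index on all its terms lie in $U$; it converges to $x$ in a topology if it is eventually in every open set containing $x$. $U\subseteq X$ is $SI_2$-open if $U$ is open and for every irreducible $F\subseteq X$, $F^\delta\cap U\ne\emptyset$ implies $F\cap U\neq\emptyset$. A net $(x_i)_{i\in I}$ $GSI_2$-converges to $x$ if there exists $\mathcal F\subseteq X^{(<\omega)}$ with $\{\uparrow G: G\in\mathcal F\}$ irreducible in $P_S(X)$ such that (i) for every open $U$, if $\uparrow G\subseteq U$ for some $G\in\mathcal F$ then $x_i\in U$ eventually, and (ii) $\bigcap_{G\in\mathcal F}\uparrow G\subseteq\uparrow x$. Let $\mathcal{O}(\mathcal{GSI}_2(X))$ be the topology of all $U\subseteq X$ such that every net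 $GSI_2$-converging to a point of $U$ is eventually in $U$. $GSI_2$-convergence in $X$ is topological if for every net and point, the net $GSI_2$-converges to the point iff it converges to it in the topology $\mathcal{O}(\mathcal{GSI}_2(X))$. For $A\subseteq X$, $x\in X$, $A\ll_{I_2}x$ means: for every irreducible $D\subseteq X$ with $x\in D^\delta$, $A\cap\mathrm{cl}D\ne\emptyset$. For $x\in X$, $w(x)=\{\uparrow F: F\in X^{(<\omega)}, F\ll_{I_2}x\}$. $X$ is $QI_2$-continuous if for every $x\in X$, $w(x)$ is irreducible in $P_S(X)$ and $\uparrow x=\bigcap w(x)$. $X$ is strongly $QI_2$-continuous if it is $QI_2$-continuous and for every $F\in X^{(<\omega)}$, $x\in X$ with $F\ll_{I_2}x$, and every open $U$ with $F\subseteq U$, there is an $SI_2$-open set $W$ with $x\in W\subseteq U$. *)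

From HB Require Import structures.
From mathcomp Require Import all_boot all_order.
From mathcomp Require Import boolp classical_sets functions cardinality topology.
Set Implicit Arguments. Unset Strict Implicit. Unset Printing Implicit Defensive.
Local Open Scope classical_set_scope.

Definition directed (I : Type) (le : I -> I -> Prop) :=
  [/\ exists i : I, True,
      (forall i, le i i),
      (forall i j k, le i j -> le j k -> le i k)
    & (forall i j, exists k, le i k /\ le j k)].

Record net (T : Type) := Net {
  net_idx : Type;
  net_le : net_idx -> net_idx -> Prop;
  net_directed : directed net_le;
  net_val : net_idx -> T }.
Arguments net_idx {T} _.
Arguments net_le {T} _ _ _.
Arguments net_val {T} _ _.

Definition eventually_in (T : Type) (N : net T) (A : set T) :=
  exists i0, forall i, net_le N i0 i -> A (net_val N i).

Definition conv_in (T : Type) (opn : set (set T)) (N : net T) (x : T) :=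
  forall U, opn U -> U x -> eventually_in N U.

Section Defs.
Variable X : topologicalType.

Definition spec_le (x y : X) := closure [set y] x.
Definition up (A : set X) := [set x | exists2 a, A a & spec_le a x].
Definition upper_bounds (A : set X) := [set y | forall a, A a -> spec_le a y].
Definition lower_bounds (A : set X) := [set y | forall a, A a -> spec_le y a].
Definition delta (A : set X) := lower_bounds (upper_bounds A).

Definition irreducible (A : set X) :=
  A !=set0 /\ forall F1 F2 : set X, closed F1 -> closed F2 ->
    A `<=` F1 `|` F2 -> A `<=` F1 \/ A `<=` F2.

Definition fin_ne (F : set X) := finite_set F /\ F !=set0.

Definition PS (Q : set X) := [/\ Q !=set0, compact Q & up Q `<=` Q].
Definition box (U : set X) := [set Q | PS Q /\ Q `<=` U].

(** upper Vietoris topology on P_S(X), generated by the basis {box U : U open} *)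
Definition PS_open (O : set (set X)) :=
  O `<=` PS /\ forall Q, O Q -> exists U, [/\ open U, Q `<=` U & box U `<=` O].
Definition PS_closed (C : set (set X)) := C `<=` PS /\ PS_open (PS `\` C).
Definition PS_irreducible (A : set (set X)) :=
  [/\ A `<=` PS, A !=set0 &
    forall C1 C2, PS_closed C1 -> PS_closed C2 ->
      A `<=` C1 `|` C2 -> A `<=` C1 \/ A `<=` C2].

Definition SI2_open (U : set X) :=
  open U /\ forall F, irreducible F -> delta F `&` U !=set0 -> F `&` U !=set0.

Definition GSI2_conv (N : net X) (x : X) :=
  exists FF : set (set X),
    [/\ (forall G, FF G -> fin_ne G),
        PS_irreducible [set up G | G in FF],
        (forall U, open U -> (exists2 G, FF G & up G `<=` U) -> eventually_in N U)
      & \bigcap_(G in FF) up G `<=` up [set x]].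

Definition GSI2_open (U : set X) :=
  forall (N : net X) x, U x -> GSI2_conv N x -> eventually_in N U.

Definition GSI2_topological :=
  forall (N : net X) x, GSI2_conv N x <-> conv_in GSI2_open N x.

Definition ll_I2 (A : set X) (x : X) :=
  forall D, irreducible D -> delta D x -> A `&` closure D !=set0.

Definition w (x : X) := [set up F | F in [set F | fin_ne F /\ ll_I2 F x]].

Definition QI2_continuous :=
  forall x, PS_irreducible (w x) /\ up [set x] = \bigcap_(Q in w x) Q.

Definition strongly_QI2_continuous :=
  QI2_continuous /\
  forall F x, fin_ne F -> ll_I2 F x -> forall U, open U -> F `<=` U ->
    exists W, [/\ SI2_open W, W x & W `<=` U].

End Defs.

(** The topology O(GSI_2(X)) always makes GSI_2-convergent nets converge.
    Conversely, if a net converges to x in O(GSI_2(X)), the finite sets F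
    with F <<_{I_2} x witness its GSI_2-convergence to x: QI_2-continuity
    provides irreducibility of w(x) and the intersection condition, and
    strong QI_2-continuity reduces the eventuality condition to the fact that
    SI_2-open sets are O(GSI_2)-open.  For the latter, given a witness family
    none of whose sets up G lies in an SI_2-open W containing y, Rudin's lemma
    yields an irreducible closed set A outside W meeting every up G; every
    upper bound of A then lies above y, so y is in A^delta, and SI_2-openness
    of W forces A to meet W, a contradiction. *)
From mathcomp Require Import all_boot all_order.
From mathcomp Require Import boolp classical_sets functions cardinality topology.

Set Implicit Arguments. Unset Strict Implicit. Unset Printing Implicit Defensive.
Local Open Scope classical_set_scope.

Section Specialization.
Variable X : topologicalType.

Lemma sub_up (A : set X) : A `<=` up A.
Proof. by move=> a Aa; exists a => //; apply: subset_closure. Qed.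

Lemma spec_le_trans (a b c : X) : spec_le a b -> spec_le b c -> spec_le a c.
Proof.
move=> ab bc; apply: (@closed_closure _ [set c]).
by apply: (closureS (B := closure [set c])) ab => _ ->.
Qed.

Lemma up_up (A : set X) : up (up A) `<=` up A.
Proof. by move=> z [b [a Aa ab] bz]; exists a => //; apply: spec_le_trans bz. Qed.

End Specialization.

Section RudinLemma.
Variable X : topologicalType.

Definition meets_each (KK : set (set X)) (A : set X) :=
  forall K, KK K -> K `&` A !=set0.

Lemma compact_setD_bigcup_chain (K : set X) (F : set (set X)) :
  compact K -> (forall O, F O -> open O) -> total_on F subset -> F !=set0 ->
  (forall O, F O -> K `\` O !=set0) -> K `\` \bigcup_(O in F) O !=set0.
Proof.
move=> Kcpt Fop Ftot [O1 FO1] KO.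
pose B O := K `\` O.
have Bfil : ProperFilter (filter_from F B).
  apply: filter_from_proper => //; apply: filter_from_filter; first by exists O1.
  move=> O O' FO FO'; have [OO'|O'O] := Ftot _ _ FO FO'.
  - by exists O' => // x [Kx nO'x]; split; split => // /OO'.
  - by exists O => // x [Kx nOx]; split; split => // /O'O.
have [p [Kp clp]] := Kcpt _ Bfil (ex_intro2 _ _ O1 FO1 (@subDsetl _ K O1)).
exists p; split => // -[O FO Op].
have BO : filter_from F B (B O) by exists O.
have [x [[_ nOx] Ox]] := clp _ _ BO (open_nbhs_nbhs (conj (Fop _ FO) Op)).
exact: nOx.
Qed.

Lemma exists_minimal_closed_meets_each (KK : set (set X)) (C : set X) :
  (forall K, KK K -> compact K) -> closed C -> meets_each KK C ->
  exists A, [/\ closed A, A `<=` C, meets_each KK A &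
    forall B, closed B -> B `<=` A -> meets_each KK B -> A `<=` B].
Proof.
move=> KKcpt Ccl KKC.
(* Zorn yields a maximal open O with C \ O still meeting each K; compactness
   of the K makes the union of a chain of such O admissible. *)
pose P := [set O : set X | open O /\ meets_each KK (C `\` O)].
have [O [[Oop KKCO] Omax]] : exists O, P O /\ forall O', O `<` O' -> ~ P O'.
  apply: Zorn_bigcup => F FP Ftot; split; first by apply: bigcup_open => O /FP[].
  have [F0|/set0P Fn0] := eqVneq F set0.
    by rewrite F0 bigcup_set0 setD0.
  move=> K KK_K; rewrite setIDA.
  apply: compact_setD_bigcup_chain => //.
  - exact: compact_closedI (KKcpt _ KK_K) Ccl.
  - by move=> O' /FP[].
  - by move=> O' /FP[_ /(_ K KK_K)]; rewrite setIDA.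
exists (C `\` O); split => //; first exact: closedI Ccl (open_closedC Oop).
move=> B Bcl BCO KKB x COx; apply: contrapT => nBx.
apply: (Omax (~` B)).
  split; first by move=> y Oy By; have [] := BCO _ By.
  by move=> OB; case: COx => _; apply; apply: OB.
split; first by rewrite openC.
move=> K KK_K; have [y [Ky By]] := KKB K KK_K.
by exists y; split => //; split; [case: (BCO _ By) | apply].
Qed.

Lemma PS_closed_meets (B : set X) :
  closed B -> PS_closed [set Q | PS Q /\ Q `&` B !=set0].
Proof.
move=> Bcl; split; first by move=> Q [].
split; first by move=> Q [].
move=> Q [PSQ nQB]; exists (~` B); split; first by rewrite openC.
  by move=> q Qq Bq; apply: nQB; split => //; exists q.
by move=> Q' [PSQ' Q'nB]; split => // -[_ [q [Q'q Bq]]]; apply: Q'nB Bq.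
Qed.

Lemma minimal_closed_meets_each_irreducible (KK : set (set X)) (A : set X) :
  PS_irreducible KK -> closed A -> meets_each KK A ->
  (forall B, closed B -> B `<=` A -> meets_each KK B -> A `<=` B) ->
  irreducible A.
Proof.
move=> [KKPS [K0 KK_K0] KKirr] Acl KKA Amin.
split; first by have [x [_ Ax]] := KKA _ KK_K0; exists x.
move=> F1 F2 F1cl F2cl AF.
have AFi_cl Fi : closed Fi -> closed (A `&` Fi) by apply: closedI.
have KKAF : KK `<=` [set Q | PS Q /\ Q `&` (A `&` F1) !=set0]
                  `|` [set Q | PS Q /\ Q `&` (A `&` F2) !=set0].
  move=> K KK_K; have [a [Ka Aa]] := KKA _ KK_K.
  by have [F1a|F2a] := AF _ Aa; [left|right]; split; (try exact: KKPS); exists a.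
have A_sub Fi : closed Fi ->
    KK `<=` [set Q | PS Q /\ Q `&` (A `&` Fi) !=set0] -> A `<=` Fi.
  move=> Ficl KKF a /(Amin _ (AFi_cl _ Ficl) (@subIsetl _ _ _)) [] // K KK_K.
  by case: (KKF K KK_K).
have [/(A_sub _ F1cl)|/(A_sub _ F2cl)] := KKirr _ _
  (PS_closed_meets (AFi_cl _ F1cl)) (PS_closed_meets (AFi_cl _ F2cl)) KKAF.
  by left.
by right.
Qed.

Lemma Rudin_lemma (KK : set (set X)) (C : set X) :
  PS_irreducible KK -> closed C -> meets_each KK C ->
  exists A, [/\ irreducible A, A `<=` C & meets_each KK A].
Proof.
move=> KKirr Ccl KKC.
have KKcpt K : KK K -> compact K by case: KKirr => KKPS _ _ /KKPS[].
have [A [Acl AC KKA Amin]] := exists_minimal_closed_meets_each KKcpt Ccl KKC.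
exists A; split => //.
exact: minimal_closed_meets_each_irreducible KKirr Acl KKA Amin.
Qed.

End RudinLemma.

Section GSI2Topology.
Variable X : topologicalType.

Lemma upper_bounds_sub_bigcap (KK : set (set X)) (A : set X) :
  (forall K, KK K -> up K `<=` K) -> meets_each KK A ->
  upper_bounds A `<=` \bigcap_(K in KK) K.
Proof.
move=> KKup KKA u uA K KK_K; have [a [Ka Aa]] := KKA K KK_K.
by apply: KKup => //; exists a => //; apply: uA.
Qed.

Lemma SI2_open_GSI2_open (W : set X) : SI2_open W -> GSI2_open W.
Proof.
move=> [Wop WSI] N y Wy [FF [_ FFirr FFev FFcap]].
have [[G FFG GW]|nGW] := pselect (exists2 G, FF G & up G `<=` W).
  by apply: FFev => //; exists G.
have FFnW : meets_each [set up G | G in FF] (~` W).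
  move=> _ [G FFG <-]; apply: contrapT => GnW; apply: nGW; exists G => //.
  by move=> z Gz; apply: contrapT => nWz; apply: GnW; exists z.
have [A [Airr AnW FFA]] := Rudin_lemma FFirr (open_closedC Wop) FFnW.
have FFup K : [set up G | G in FF] K -> up K `<=` K.
  by move=> [G _ <-]; apply: up_up.
have yA : delta A y.
  move=> u /(upper_bounds_sub_bigcap FFup FFA) uFF.
  have [_ ->] // : up [set y] u.
  by apply: FFcap => G FFG; apply: uFF; exists G.
have [a [Aa Wa]] := WSI _ Airr (ex_intro _ y (conj yA Wy)).
by case: (AnW a Aa Wa).
Qed.

Lemma GSI2_conv_conv_in (N : net X) (x : X) :
  GSI2_conv N x -> conv_in (@GSI2_open X) N x.
Proof. by move=> Nx U GU Ux; apply: GU Ux Nx. Qed.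

Lemma GSI2_conv_of_conv_in (N : net X) (x : X) :
  strongly_QI2_continuous X -> conv_in (@GSI2_open X) N x -> GSI2_conv N x.
Proof.
move=> [QI strong] Nx; have [wx_irr wx_cap] := QI x.
exists [set F | fin_ne F /\ ll_I2 F x]; split.
- by move=> G [].
- exact: wx_irr.
- move=> U Uop [G [Gfin Gx] GU].
  have GU' : G `<=` U := subset_trans (@sub_up _ G) GU.
  have [W [WSI Wx WU]] := strong G x Gfin Gx U Uop GU'.
  have [i0 Ni0] := Nx W (SI2_open_GSI2_open WSI) Wx.
  by exists i0 => i /Ni0 /WU.
- by rewrite wx_cap => z z_w Q [G Gx <-]; apply: z_w.
Qed.

End GSI2Topology.

Theorem proposition4p11 (X : topologicalType) :
  kolmogorov_space X -> strongly_QI2_continuous X -> GSI2_topological X.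
Proof.
move=> _ Xstrong N x; split; first exact: GSI2_conv_conv_in.
exact: GSI2_conv_of_conv_in.
Qed.
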